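(* Let $G=(V,E)$ be a transitive directed graph, and let $\mathrm{S}=(S_v,S_e)$ be a TCK family for $G$ on a Hilbert space $\mathcal{H}$ with free semigroupoid algebra $\mathfrak{S}$. Suppose that for every $v\in V$ there exists $w\in V$ such that $S_v\mathfrak{S}S_w=S_vB(\mathcal{H})S_w$. Then $\mathfrak{S}=B(\mathcal{H})$.
   Context: A directed graph $G=(V,E,r,s)$; a path $e_1\cdots e_n$ has $s(e_i)=r(e_{i+1})$; $G$ is transitive if there is a path between any vertex and any other. A TCK family on $\mathcal{H}$: the $S_v$ are pairwise orthogonal projections, $S_e^*S_e=S_{s(e)}$, and $\sum_{e\in F}S_eS_e^*\le S_v$ for finite $F\subseteq r^{-1}(v)$; it is assumed nondegenerate, i.e. $\mathrm{SOT}\text{-}\sum_{v\in V}S_v=I_{\mathcal{H}}$. The free semigroupoid algebra $\mathfrak{S}$ is the WOT-closed algebra generated by $\{S_v,S_e\}$. *)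

From HB Require Import structures.
From mathcomp Require Import all_boot all_order all_algebra.
From mathcomp Require Import complex.
From mathcomp Require Import reals.
From Stdlib Require List.
Set Implicit Arguments. Unset Strict Implicit. Unset Printing Implicit Defensive.
Import Order.TTheory GRing.Theory Num.Theory.
Local Open Scope ring_scope.

Section Hilbert.
Variable R : realType.
Local Notation C := R[i].
Variable H : lmodType C.
Variable inner : H -> H -> C.

Definition nsq (x : H) : C := inner x x.

Definition is_inner_product : Prop :=
  [/\ (forall (a : C) (x y z : H), inner (a *: x + y) z = a * inner x z + inner y z),
      (forall x y : H, inner y x = (inner x y)^*),
      (forall x : H, 0 <= inner x x) &
      (forall x : H, inner x x = 0 -> x = 0)].

Definition cauchy_seq (u : nat -> H) : Prop :=
  forall eps : C, 0 < eps -> exists N : nat, forall m n : nat,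
    (N <= m)%N -> (N <= n)%N -> nsq (u m - u n) < eps.

Definition converges_to (u : nat -> H) (l : H) : Prop :=
  forall eps : C, 0 < eps -> exists N : nat, forall n : nat,
    (N <= n)%N -> nsq (u n - l) < eps.

Definition is_hilbert_space : Prop :=
  is_inner_product /\
  (forall u : nat -> H, cauchy_seq u -> exists l : H, converges_to u l).

Definition bounded_op (T : H -> H) : Prop :=
  [/\ (forall x y : H, T (x + y) = T x + T y),
      (forall (a : C) (x : H), T (a *: x) = a *: T x) &
      exists M : C, forall x : H, nsq (T x) <= M * nsq x].

Definition is_adjoint (T Tstar : H -> H) : Prop :=
  forall x y : H, inner (T x) y = inner x (Tstar y).

Definition is_projection (P : H -> H) : Prop :=
  [/\ bounded_op P, (forall x, P (P x) = P x) & is_adjoint P P].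

Definition in_wot_closure (A : (H -> H) -> Prop) (T : H -> H) : Prop :=
  forall (ps : seq (H * H)%type) (eps : C), 0 < eps ->
    exists B : H -> H, A B /\
      forall p, List.In p ps -> `|inner (T p.1) p.2 - inner (B p.1) p.2| < eps.

Definition wot_closed_algebra (A : (H -> H) -> Prop) : Prop :=
  [/\ (forall T, A T -> bounded_op T),
      A (fun _ => 0),
      (forall T U, A T -> A U -> A (fun x => T x + U x)),
      (forall (c : C) T, A T -> A (fun x => c *: T x)) &
      (forall T U, A T -> A U -> A (fun x => T (U x)))] /\
      (forall T, bounded_op T -> in_wot_closure A T -> A T).

Definition wot_generated (gens : (H -> H) -> Prop) (T : H -> H) : Prop :=
  forall A : (H -> H) -> Prop,
    wot_closed_algebra A -> (forall G, gens G -> A G) -> A T.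

Section Graph.
Variables (V E : Type) (r s : E -> V).

Fixpoint is_path (p : seq E) : Prop :=
  match p with
  | e1 :: ((e2 :: _) as q) => s e1 = r e2 /\ is_path q
  | _ => True
  end.

Definition transitive_graph : Prop :=
  forall u w : V, u <> w ->
    exists (e0 : E) (p : seq E), is_path (e0 :: p) /\
      r e0 = u /\ s (last e0 p) = w.

Definition TCK_family (Sv : V -> H -> H) (Se Sstar : E -> H -> H) : Prop :=
  [/\ (forall v, is_projection (Sv v)),
      (forall v w, v <> w -> forall x, Sv v (Sv w x) = 0),
      (forall e, bounded_op (Se e) /\ is_adjoint (Se e) (Sstar e)),
      (forall e x, Sstar e (Se e x) = Sv (s e) x) &
      (forall (v : V) (F : seq E), List.NoDup F ->
         (forall e, List.In e F -> r e = v) ->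
         forall x : H,
           \sum_(e <- F) inner (Se e (Sstar e x)) x <= inner (Sv v x) x)].

Definition TCK_nondegenerate (Sv : V -> H -> H) : Prop :=
  forall (x : H) (eps : C), 0 < eps -> exists F0 : seq V,
    forall F : seq V, List.NoDup F -> List.incl F0 F ->
      nsq (\sum_(v <- F) Sv v x - x) < eps.

Definition free_semigroupoid_algebra (Sv : V -> H -> H) (Se : E -> H -> H) :
  (H -> H) -> Prop :=
  wot_generated (fun G => (exists v, G = Sv v) \/ (exists e, G = Se e)).

End Graph.
End Hilbert.

From mathcomp Require Import all_boot all_order all_algebra.
From mathcomp Require Import complex reals ring.
From Stdlib Require Import FunctionalExtensionality ClassicalDescription.
From Stdlib Require List.
Set Implicit Arguments.
Unset Strict Implicit.
Unset Printing Implicit Defensive.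
Import Order.TTheory GRing.Theory Num.Theory.
Local Open Scope ring_scope.

(* Call the corner (u, w) full when S_u B(H) S_w lies in the free semigroupoid
   algebra.  Since S_(r e) S_e = S_e and S_e^* S_e = S_(s e), we have
   S_u T S_(s e) = S_u (T S_e^* ) S_(r e) S_e, so fullness of (u, r e) passes
   to (u, s e); following paths, transitivity of G spreads the full corner
   given by the hypothesis to all corners (u, w).  By nondegeneracy the finite
   sums P_F of the S_v tend strongly to I, hence every bounded T is the
   WOT-limit of the compressions P_F T P_F, which are finite sums of corners. *)

Section FiniteSubsetNet.
Variable V : Type.

(* "Eventually" along the net of finite subsets of V ordered by inclusion;
   finite subsets are represented by duplicate-free lists. *)
Definition eventually_finsub (P : seq V -> Prop) : Prop :=
  exists F0 : seq V, forall F, List.NoDup F -> List.incl F0 F -> P F.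

Lemma eventually_finsub_mono (P Q : seq V -> Prop) :
  (forall F, P F -> Q F) -> eventually_finsub P -> eventually_finsub Q.
Proof. by move=> PQ [F0 P_F0]; exists F0 => F nd inc; apply/PQ/P_F0. Qed.

Lemma eventually_finsub_and (P Q : seq V -> Prop) :
  eventually_finsub P -> eventually_finsub Q ->
  eventually_finsub (fun F => P F /\ Q F).
Proof.
move=> [F1 P_F1] [F2 Q_F2]; exists (F1 ++ F2) => F nd inc; split.
- by apply: P_F1 nd _ => v v_in; apply/inc/List.in_or_app; left.
- by apply: Q_F2 nd _ => v v_in; apply/inc/List.in_or_app; right.
Qed.

Lemma eventually_finsub_all I (r : seq I) (P : I -> seq V -> Prop) :
  (forall i, List.In i r -> eventually_finsub (P i)) ->
  eventually_finsub (fun F => forall i, List.In i r -> P i F).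
Proof.
elim: r => [|i r IHr] evP; first by exists [::] => F _ _ i [].
have evPr := IHr (fun j jr => evP j (or_intror jr)).
have evPi := evP i (or_introl erefl).
apply: eventually_finsub_mono (eventually_finsub_and evPi evPr).
by move=> F [Pi Pr] j [<-|jr] //; apply: Pr.
Qed.

Lemma eventually_finsub_ex (P : seq V -> Prop) :
  eventually_finsub P -> exists F, P F.
Proof.
move=> [F0 P_F0]; pose dec (v w : V) := excluded_middle_informative (v = w).
exists (List.nodup dec F0); apply: P_F0; first exact: List.NoDup_nodup.
by move=> v v_in; apply/List.nodup_In.
Qed.

End FiniteSubsetNet.

Section Hilbert.
Variables (R : realType) (H : lmodType R[i]) (inner : H -> H -> R[i]).
Hypothesis inner_product : is_inner_product inner.

Lemma inner_linear a x y z : inner (a *: x + y) z = a * inner x z + inner y z.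
Proof. by case: inner_product. Qed.

Lemma inner_conj x y : inner y x = (inner x y)^*.
Proof. by case: inner_product. Qed.

Lemma inner_ge0 x : 0 <= inner x x.
Proof. by case: inner_product. Qed.

Lemma inner_eq0 x : inner x x = 0 -> x = 0.
Proof. by case: inner_product => _ _ _; apply. Qed.

Lemma inner0l z : inner 0 z = 0.
Proof.
apply: (addrI (inner 0 z)); rewrite addr0.
by have := inner_linear 1 0 0 z; rewrite scaler0 addr0 mul1r.
Qed.

Lemma innerDl x y z : inner (x + y) z = inner x z + inner y z.
Proof. by rewrite -[x in LHS]scale1r inner_linear mul1r. Qed.

Lemma innerZl a x z : inner (a *: x) z = a * inner x z.
Proof. by rewrite -[a *: x]addr0 inner_linear inner0l addr0. Qed.

Lemma innerNl x z : inner (- x) z = - inner x z.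
Proof. by rewrite -scaleN1r innerZl mulN1r. Qed.

Lemma innerBl x y z : inner (x - y) z = inner x z - inner y z.
Proof. by rewrite innerDl innerNl. Qed.

Lemma inner0r z : inner z 0 = 0.
Proof. by rewrite inner_conj inner0l conjC0. Qed.

Lemma innerDr x y z : inner x (y + z) = inner x y + inner x z.
Proof. by rewrite !(inner_conj _ x) innerDl; apply: rmorphD. Qed.

Lemma innerZr a x z : inner x (a *: z) = a^* * inner x z.
Proof. by rewrite !(inner_conj _ x) innerZl; apply: rmorphM. Qed.

Lemma innerNr x z : inner x (- z) = - inner x z.
Proof. by rewrite !(inner_conj _ x) innerNl; apply: rmorphN. Qed.

Lemma innerBr x y z : inner x (y - z) = inner x y - inner x z.
Proof. by rewrite innerDr innerNr. Qed.

Lemma inner_self_conj x : (inner x x)^* = inner x x.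
Proof. by rewrite -inner_conj. Qed.

Lemma inner_self_opp x : inner (- x) (- x) = inner x x.
Proof. by rewrite innerNl innerNr opprK. Qed.

Lemma inner_extr a b : (forall x, inner x a = inner x b) -> a = b.
Proof.
move=> eq_ab; apply/eqP; rewrite -subr_eq0; apply/eqP; apply: inner_eq0.
by rewrite innerBr eq_ab subrr.
Qed.

Lemma inner_selfD_le a b :
  inner (a + b) (a + b) <= 2 * inner a a + 2 * inner b b.
Proof.
have parallelogram : 2 * inner a a + 2 * inner b b - inner (a + b) (a + b) =
    inner (a - b) (a - b).
  by rewrite !innerDl !innerNl !innerDr !innerNr; ring.
by rewrite -subr_ge0 parallelogram inner_ge0.
Qed.

Lemma cauchy_schwarz a b : `|inner a b| ^+ 2 <= inner a a * inner b b.
Proof.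
have [b0|b_neq0] := eqVneq (inner b b) 0.
  by rewrite (inner_eq0 b0) !inner0r normr0 expr0n mulr0.
have b_gt0 : 0 < inner b b by rewrite lt_def b_neq0 inner_ge0.
pose w := inner b b *: a - inner a b *: b.
have w_self : inner w w =
    inner b b * (inner b b * inner a a - (inner a b)^* * inner a b).
  by rewrite /w !innerBl !innerZl !innerBr !innerZr inner_self_conj
     (inner_conj a b); ring.
have := inner_ge0 w.
by rewrite w_self pmulr_rge0 // subr_ge0 normCKC [inner a a * _]mulrC.
Qed.

Lemma norm_inner_lt a b e :
  0 <= e -> inner a a * inner b b < e ^+ 2 -> `|inner a b| < e.
Proof.
move=> e_ge0 lt_ab; rewrite -(ltr_pXn2r (n := 2)) ?nnegrE //.
exact: le_lt_trans (cauchy_schwarz a b) lt_ab.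
Qed.

Lemma bounded_op_nonneg T : bounded_op inner T ->
  exists2 M, 0 <= M & forall x, inner (T x) (T x) <= M * inner x x.
Proof.
case=> _ _ [M leM]; exists `|M| => // x.
have M_x_ge0 : 0 <= M * inner x x := le_trans (inner_ge0 _) (leM x).
by have := leM x; rewrite -(ger0_norm M_x_ge0) normrM (ger0_norm (inner_ge0 x)).
Qed.

Lemma bounded_opD T x y : bounded_op inner T -> T (x + y) = T x + T y.
Proof. by case. Qed.

Lemma bounded_opB T x y : bounded_op inner T -> T (x - y) = T x - T y.
Proof. by case=> TD TZ _; rewrite TD -scaleN1r TZ scaleN1r. Qed.

Lemma bounded_op0 T : bounded_op inner T -> T 0 = 0.
Proof. by case=> _ TZ _; have := TZ 0 0; rewrite !scale0r. Qed.

Lemma bounded_op_sum T I (r : seq I) (f : I -> H) : bounded_op inner T ->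
  T (\sum_(i <- r) f i) = \sum_(i <- r) T (f i).
Proof.
move=> hT; apply: (big_morph T _ (bounded_op0 hT)) => x y.
exact: bounded_opD.
Qed.

Lemma bounded_op_zero : bounded_op inner (fun _ => 0).
Proof.
split=> [x y|a x|]; rewrite ?addr0 ?scaler0 //.
by exists 0 => x; rewrite /nsq inner0l mul0r.
Qed.

Lemma bounded_op_comp T U : bounded_op inner T -> bounded_op inner U ->
  bounded_op inner (fun x => T (U x)).
Proof.
move=> hT hU; have [M M_ge0 leM] := bounded_op_nonneg hT.
have [N N_ge0 leN] := bounded_op_nonneg hU.
case: hT hU => [TD TZ _] [UD UZ _]; split=> [x y|a x|].
- by rewrite UD TD.
- by rewrite UZ TZ.
- exists (M * N) => x; apply: le_trans (leM _) _.
  by rewrite -mulrA ler_wpM2l.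
Qed.

Lemma bounded_op_add T U : bounded_op inner T -> bounded_op inner U ->
  bounded_op inner (fun x => T x + U x).
Proof.
move=> hT hU; have [M M_ge0 leM] := bounded_op_nonneg hT.
have [N N_ge0 leN] := bounded_op_nonneg hU.
case: hT hU => [TD TZ _] [UD UZ _]; split=> [x y|a x|].
- by rewrite UD TD addrACA.
- by rewrite UZ TZ scalerDr.
- exists (2 * M + 2 * N) => x; apply: le_trans (inner_selfD_le _ _) _.
  by rewrite [leRHS]mulrDl -!mulrA lerD // ler_wpM2l.
Qed.

Lemma bounded_op_scale c T : bounded_op inner T ->
  bounded_op inner (fun x => c *: T x).
Proof.
move=> hT; have [M M_ge0 leM] := bounded_op_nonneg hT.
case: hT => TD TZ _; split=> [x y|a x|].
- by rewrite TD scalerDr.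
- by rewrite TZ !scalerA mulrC.
- exists (`|c| ^+ 2 * M) => x.
  rewrite /nsq innerZl innerZr mulrA -normCK -[leRHS]mulrA.
  by apply: ler_wpM2l; rewrite ?exprn_ge0.
Qed.

Lemma inner_self_le_near a b : inner (a - b) (a - b) <= 1 ->
  inner a a <= 2 + 2 * inner b b.
Proof.
move=> near_ab; have := inner_selfD_le (a - b) b; rewrite subrK => /le_trans.
by apply; rewrite lerD // -[leRHS]mulr1 ler_wpM2l.
Qed.

Lemma compression_error T Q x y : bounded_op inner T -> is_adjoint inner Q Q ->
  inner (T x) y - inner (Q (T (Q x))) y =
  inner (T x) (y - Q y) + inner (T (x - Q x)) (Q y).
Proof.
move=> hT Q_adj; rewrite Q_adj (bounded_opB _ _ hT) innerBr innerBl; ring.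
Qed.

(* No bound on Q is needed: by compression_error only the vectors Q x and
   Q y enter. *)
Lemma compression_estimate T x y eps : bounded_op inner T -> 0 < eps ->
  exists2 d, 0 < d & forall Q, is_adjoint inner Q Q ->
    inner (Q x - x) (Q x - x) < d -> inner (Q y - y) (Q y - y) < d ->
    `|inner (T x) y - inner (Q (T (Q x))) y| < eps.
Proof.
move=> hT eps_gt0; have [M M_ge0 leM] := bounded_op_nonneg hT.
set a := inner (T x) (T x); set b := inner y y; set e := eps / 2.
have [a_ge0 b_ge0] : 0 <= a /\ 0 <= b by split; apply: inner_ge0.
have Mb_ge0 : 0 <= M * (2 + 2 * b) by rewrite mulr_ge0 // addr_ge0 // mulr_ge0.
have e_ge0 : 0 <= e by rewrite divr_ge0 // ltW.
set c := a + M * (2 + 2 * b); set K := c + (1 + e ^+ 2); set d := e ^+ 2 / K.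
have c_lt_K : c < K by rewrite ltrDl ltr_wpDr ?exprn_ge0.
have K_gt0 : 0 < K := le_lt_trans (addr_ge0 a_ge0 Mb_ge0) c_lt_K.
have d_gt0 : 0 < d by rewrite divr_gt0 // exprn_gt0 // divr_gt0 // ltr0n.
have d_le1 : d <= 1.
  by rewrite ler_pdivrMr // mul1r ler_wpDl ?addr_ge0 // lerDr.
have small z : z <= c -> z * d < e ^+ 2.
  move=> z_le_c; apply: le_lt_trans (ler_wpM2r (ltW d_gt0) z_le_c) _.
  by rewrite -[ltRHS](divfK (lt0r_neq0 K_gt0)) mulrC ltr_pM2l.
exists d => // Q Q_adj Qx_near Qy_near.
have Qy_le := inner_self_le_near (ltW (lt_le_trans Qy_near d_le1)).
rewrite compression_error // (splitr eps).
apply: le_lt_trans (ler_normD _ _) _; apply: ltrD; apply: norm_inner_lt => //.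
- rewrite -opprB inner_self_opp; apply: le_lt_trans (small a _); last first.
    by rewrite lerDl.
  by rewrite ler_wpM2l // ltW.
- apply: le_lt_trans (small (M * (2 + 2 * b)) _); last by rewrite lerDr.
  rewrite mulrAC; apply: ler_pM => //; try exact: inner_ge0.
  apply: le_trans (leM _) _; rewrite ler_wpM2l // -opprB inner_self_opp.
  exact: ltW.
Qed.

Section WotGenerated.
Variable gens : (H -> H) -> Prop.
Local Notation WG := (wot_generated inner gens).

Lemma wot_generated_eqfun T U : T =1 U -> WG T -> WG U.
Proof. by move=> /functional_extensionality ->. Qed.

Lemma wot_generated_gen G : gens G -> WG G.
Proof. by move=> gG A _; apply. Qed.

Lemma wot_generated_zero : WG (fun _ => 0).
Proof. by move=> A [[]]. Qed.

Lemma wot_generated_add T U : WG T -> WG U -> WG (fun x => T x + U x).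
Proof.
move=> gT gU A A_wot A_gens; case: (A_wot) => [[_ _ A_add _ _] _].
by apply: A_add; [exact: gT | exact: gU].
Qed.

Lemma wot_generated_comp T U : WG T -> WG U -> WG (fun x => T (U x)).
Proof.
move=> gT gU A A_wot A_gens; case: (A_wot) => [[_ _ _ _ A_comp] _].
by apply: A_comp; [exact: gT | exact: gU].
Qed.

Lemma wot_generated_sum I (r : seq I) (f : I -> H -> H) :
  (forall i, WG (f i)) -> WG (fun x => \sum_(i <- r) f i x).
Proof.
move=> gf; elim: r => [|i r IHr].
  by apply: wot_generated_eqfun wot_generated_zero => x; rewrite big_nil.
apply: wot_generated_eqfun (wot_generated_add (gf i) IHr) => x.
by rewrite big_cons.
Qed.

Lemma wot_closed_algebra_bounded : wot_closed_algebra inner (bounded_op inner).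
Proof.
split=> //; split=> //.
- exact: bounded_op_zero.
- exact: bounded_op_add.
- exact: bounded_op_scale.
- exact: bounded_op_comp.
Qed.

Lemma wot_generated_bounded T :
  (forall G, gens G -> bounded_op inner G) -> WG T -> bounded_op inner T.
Proof. by move=> gens_bounded; apply; [exact: wot_closed_algebra_bounded|]. Qed.

Lemma wot_generated_closed T :
  bounded_op inner T -> in_wot_closure inner WG T -> WG T.
Proof.
move=> hT T_closure A A_wot A_gens; apply: A_wot.2 => // ps eps eps_gt0.
have [B [gB B_near]] := T_closure ps eps eps_gt0.
by exists B; split=> //; apply: gB.
Qed.

End WotGenerated.

Section TCKFamily.
Variables (V E : Type) (r s : E -> V).
Variables (Sv : V -> H -> H) (Se Sstar : E -> H -> H).
Hypothesis tck : TCK_family inner r s Sv Se Sstar.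
Local Notation FSA := (free_semigroupoid_algebra inner Sv Se).

Lemma Sv_bounded v : bounded_op inner (Sv v).
Proof. by case: tck => Sv_proj _ _ _ _; case: (Sv_proj v). Qed.

Lemma Sv_idem v x : Sv v (Sv v x) = Sv v x.
Proof. by case: tck => Sv_proj _ _ _ _; case: (Sv_proj v). Qed.

Lemma Sv_adj v a b : inner (Sv v a) b = inner a (Sv v b).
Proof. by case: tck => Sv_proj _ _ _ _; case: (Sv_proj v) => _ _ ->. Qed.

Lemma Se_bounded e : bounded_op inner (Se e).
Proof. by case: tck => _ _ Se_adj _ _; case: (Se_adj e). Qed.

Lemma Se_adj e a b : inner (Se e a) b = inner a (Sstar e b).
Proof. by case: tck => _ _ Se_adj _ _; case: (Se_adj e) => _ ->. Qed.

Lemma Sstar_Se e x : Sstar e (Se e x) = Sv (s e) x.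
Proof. by case: tck => _ _ _ -> _. Qed.

(* The Cuntz-Krieger inequality for F = [:: e], i.e. S_e S_e^* <= S_(r e). *)
Lemma Sstar_le_Sv e x :
  inner (Sstar e x) (Sstar e x) <= inner (Sv (r e) x) (Sv (r e) x).
Proof.
case: tck => _ _ _ _ CK; rewrite -Sv_adj Sv_idem.
have := CK (r e) [:: e] _ _ x; rewrite big_seq1 Se_adj; apply.
- by constructor; [case | constructor].
- by move=> e' [<-|[]].
Qed.

Lemma Sstar_bounded e : bounded_op inner (Sstar e).
Proof.
have [M M_ge0 leM] := bounded_op_nonneg (Sv_bounded (r e)).
split=> [y z|a y|].
- by apply: inner_extr => x; rewrite innerDr -!Se_adj innerDr.
- by apply: inner_extr => x; rewrite innerZr -!Se_adj innerZr.
- by exists M => x; apply: le_trans (Sstar_le_Sv e x) (leM x).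
Qed.

(* By Sstar_le_Sv, S_e^* kills the range of I - S_(r e), which is therefore
   orthogonal to the range of S_e. *)
Lemma Sv_Se e x : Sv (r e) (Se e x) = Se e x.
Proof.
have Sstar_ker z : Sv (r e) z = 0 -> Sstar e z = 0.
  move=> Sz0; apply: inner_eq0; apply/le_anti; rewrite inner_ge0 andbT.
  by have := Sstar_le_Sv e z; rewrite Sz0 inner0l.
set z := Se e x - Sv (r e) (Se e x).
have Sz0 : Sv (r e) z = 0.
  by rewrite bounded_opB ?Sv_idem ?subrr //; apply: Sv_bounded.
apply/eqP; rewrite eq_sym -subr_eq0 -/z; apply/eqP/inner_eq0.
by rewrite {1}/z innerBl Se_adj Sstar_ker // inner0r Sv_adj Sz0 inner0r subrr.
Qed.

Lemma FSA_Sv v : FSA (Sv v).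
Proof. by apply: wot_generated_gen; left; exists v. Qed.

Lemma FSA_Se e : FSA (Se e).
Proof. by apply: wot_generated_gen; right; exists e. Qed.

Definition full_corner (u w : V) : Prop :=
  forall T, bounded_op inner T -> FSA (fun x => Sv u (T (Sv w x))).

Lemma full_corner_of_compressions u w :
  (forall T, bounded_op inner T -> exists2 A, FSA A &
     (fun x => Sv u (T (Sv w x))) = (fun x => Sv u (A (Sv w x)))) ->
  full_corner u w.
Proof.
move=> compressions T hT; have [A FSA_A ->] := compressions T hT.
exact: wot_generated_comp (FSA_Sv u) (wot_generated_comp FSA_A (FSA_Sv w)).
Qed.

Lemma full_corner_edge u e : full_corner u (r e) -> full_corner u (s e).
Proof.
move=> full_ue T hT.
have := full_ue _ (bounded_op_comp hT (Sstar_bounded e)).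
move=> /wot_generated_comp /(_ (FSA_Se e)); apply: wot_generated_eqfun => x.
by rewrite Sv_Se Sstar_Se.
Qed.

Lemma full_corner_path u e0 p : is_path r s (e0 :: p) ->
  full_corner u (r e0) -> full_corner u (s (last e0 p)).
Proof.
elim: p e0 => [|e1 p IHp] e0 /=; first by move=> _; apply: full_corner_edge.
move=> [s_e0 path_p] full_u; apply: IHp path_p _.
by rewrite -s_e0; apply: full_corner_edge.
Qed.

Lemma full_corner_transitive u w : transitive_graph r s ->
  full_corner u w -> forall w', full_corner u w'.
Proof.
move=> trans full_uw w'; have [<- //|w_neq] := classic (w = w').
have [e0 [p [path_p [r_e0 <-]]]] := trans w w' w_neq.
by apply: full_corner_path; rewrite ?r_e0.
Qed.

Definition proj_sum (F : seq V) (x : H) : H := \sum_(v <- F) Sv v x.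

Lemma proj_sum_adj F : is_adjoint inner (proj_sum F) (proj_sum F).
Proof.
move=> x y; rewrite /proj_sum; elim: F => [|v F IHF].
  by rewrite !big_nil inner0l inner0r.
by rewrite !big_cons innerDl innerDr IHF Sv_adj.
Qed.

Lemma compression_in_FSA T F G : (forall u w, full_corner u w) ->
  bounded_op inner T -> FSA (fun x => proj_sum G (T (proj_sum F x))).
Proof.
move=> full hT.
have FSA_corner_sums u := wot_generated_sum F (fun w => full u w T hT).
have := wot_generated_sum G FSA_corner_sums.
apply: wot_generated_eqfun => x; rewrite /proj_sum (bounded_op_sum _ _ hT).
by apply: eq_bigr => u _; rewrite (bounded_op_sum _ _ (Sv_bounded u)).
Qed.

Lemma compression_wot_approx T ps eps : TCK_nondegenerate inner Sv ->
  bounded_op inner T -> 0 < eps ->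
  eventually_finsub (fun F => forall p, List.In p ps ->
    `|inner (T p.1) p.2 - inner (proj_sum F (T (proj_sum F p.1))) p.2| < eps).
Proof.
move=> nondeg hT eps_gt0; apply: eventually_finsub_all => -[x y] _ /=.
have [d d_gt0 close] := compression_estimate x y hT eps_gt0.
have near_xy := eventually_finsub_and (nondeg x d d_gt0) (nondeg y d d_gt0).
apply: eventually_finsub_mono near_xy => F [near_x near_y].
exact: close (proj_sum_adj F) near_x near_y.
Qed.

End TCKFamily.
End Hilbert.

Theorem lemma3p2 (R : realType) (H : lmodType R[i]) (inner : H -> H -> R[i])
  (V E : Type) (r s : E -> V)
  (Sv : V -> H -> H) (Se Sstar : E -> H -> H) :
  is_hilbert_space inner ->
  transitive_graph r s ->
  TCK_family inner r s Sv Se Sstar ->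
  TCK_nondegenerate inner Sv ->
  (forall v : V, exists w : V, forall X : H -> H,
     (exists A, free_semigroupoid_algebra inner Sv Se A /\
                X = (fun x => Sv v (A (Sv w x)))) <->
     (exists T, bounded_op inner T /\ X = (fun x => Sv v (T (Sv w x))))) ->
  forall T : H -> H, bounded_op inner T <-> free_semigroupoid_algebra inner Sv Se T.
Proof.
move=> [inner_product _] transitive tck nondeg corners T; split=> [hT|].
- have full u w : full_corner inner Sv Se u w.
    have [w0 corner_eq] := corners u.
    apply: (full_corner_transitive inner_product tck (w := w0) transitive).
    apply: full_corner_of_compressions => T' hT'.
    have [A [FSA_A ->]] := (corner_eq _).2 (ex_intro _ T' (conj hT' erefl)).
    by exists A.
  apply: wot_generated_closed => // ps eps eps_gt0.
  have [F approx] := eventually_finsub_ex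
    (compression_wot_approx inner_product tck ps nondeg hT eps_gt0).
  exists (fun x => proj_sum Sv F (T (proj_sum Sv F x))); split=> //.
  exact: (compression_in_FSA tck F F full hT).
- move=> FSA_T; apply: (wot_generated_bounded inner_product _ FSA_T).
  move=> _ [[v ->]|[e ->]].
  + exact: Sv_bounded tck v.
  + exact: Se_bounded tck e.
Qed.
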